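(* Let $R$ be a ring and $M$ a left $R$-module. If the prime radical $\beta(M)$ is a completely prime submodule of $M$, then $M$ is 2-primal.
   Context: Rings are associative with identity; modules are unital left modules. A submodule $P$ of $M$ is prime if $RM\not\subseteq P$ and for every ideal $A$ of $R$ and submodule $K$ with $AK\subseteq P$, $K\subseteq P$ or $AM\subseteq P$; completely prime if $RM\not\subseteq P$ and for $r\in R$, $m\in M$, $rm\in P$ implies $m\in P$ or $rM\subseteq P$. $\beta(M)$ (resp. $\beta_{co}(M)$) is the intersection of all prime (resp. completely prime) submodules of $M$ ($=M$ if none). $M$ is 2-primal if $\beta(M)=\beta_{co}(M)$. *)

From mathcomp Require Import all_boot all_algebra.
Set Implicit Arguments. Unset Strict Implicit. Unset Printing Implicit Defensive.
Import GRing.Theory.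
Local Open Scope ring_scope.

(* Rings: associative with identity (pzRingType, zero ring allowed);
   modules: unital left modules (lmodType R).
   Subsets are represented as Prop-valued predicates. *)

Section ModDefs.
Variables (R : pzRingType) (M : lmodType R).

Definition is_submodule (N : M -> Prop) : Prop :=
  [/\ N 0,
      (forall x y, N x -> N y -> N (x + y)) &
      (forall (r : R) x, N x -> N (r *: x))].

Definition is_ideal (A : R -> Prop) : Prop :=
  [/\ A 0,
      (forall a b, A a -> A b -> A (a + b)),
      (forall r a, A a -> A (r * a)) &
      (forall r a, A a -> A (a * r))].

(* AK: the submodule generated by { a *: k | a in A, k in K } *)
Definition prod_sub (A : R -> Prop) (K : M -> Prop) : M -> Prop :=
  fun m => forall N : M -> Prop, is_submodule N ->
    (forall a k, A a -> K k -> N (a *: k)) -> N m.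

Definition subset (X Y : M -> Prop) : Prop := forall m, X m -> Y m.

(* RM, where R and M are viewed as the full subsets *)
Definition RM : M -> Prop := prod_sub (fun _ => True) (fun _ => True).

Definition prime_submodule (P : M -> Prop) : Prop :=
  [/\ is_submodule P,
      ~ subset RM P &
      (forall (A : R -> Prop) (K : M -> Prop), is_ideal A -> is_submodule K ->
         subset (prod_sub A K) P ->
         subset K P \/ subset (prod_sub A (fun _ => True)) P)].

Definition completely_prime_submodule (P : M -> Prop) : Prop :=
  [/\ is_submodule P,
      ~ subset RM P &
      (forall (r : R) (m : M), P (r *: m) ->
         P m \/ (forall m' : M, P (r *: m')))].

(* prime radical: intersection of all prime submodules (= M if none) *)
Definition beta : M -> Prop :=
  fun m => forall P, prime_submodule P -> P m.

Definition beta_co : M -> Prop :=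
  fun m => forall P, completely_prime_submodule P -> P m.

Definition two_primal : Prop := forall m, beta m <-> beta_co m.

End ModDefs.

(* Every completely prime submodule is prime: if [AK ⊆ P] and some [k ∈ K]
   lies outside [P], then [a k ∈ P] forces [a M ⊆ P] for each [a ∈ A], so
   [AM ⊆ P].  Hence [β(M) ⊆ β_co(M)] always, and when [β(M)] is itself
   completely prime it is one of the submodules intersected in [β_co(M)],
   which gives the reverse inclusion. *)

From Pilot Require Import Defs.
From mathcomp Require Import all_boot all_algebra.
From Stdlib Require Import Classical.

Section CompletelyPrime.
Variables (R : pzRingType) (M : lmodType R).

Lemma prod_sub_gen {A : R -> Prop} {K : M -> Prop} {a k} :
  A a -> K k -> prod_sub A K (a *: k).
Proof. by move=> Aa Kk N _; apply. Qed.

Lemma completely_prime_submodule_prime (P : M -> Prop) :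
  completely_prime_submodule P -> prime_submodule P.
Proof.
case=> subP notRM_P cpP; split=> // A K _ _ AK_P.
have [K_P | notK_P] := classic (Defs.subset K P); first by left.
have [k notKk_Pk] := not_all_ex_not M _ notK_P.
have [Kk notPk] := imply_to_and _ _ notKk_Pk.
right=> m; apply=> // a m' Aa _.
have [//|aM_P] := cpP a k (AK_P _ (prod_sub_gen Aa Kk)).
exact: aM_P.
Qed.

Lemma beta_sub_beta_co : Defs.subset (@beta R M) (@beta_co R M).
Proof. by move=> m beta_m P /completely_prime_submodule_prime; apply: beta_m. Qed.

End CompletelyPrime.

Theorem proposition3p9 (R : pzRingType) (M : lmodType R) :
  completely_prime_submodule (@beta R M) -> @two_primal R M.
Proof.
move=> cp_beta m; split=> [|beta_co_m]; first exact: beta_sub_beta_co.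
exact: beta_co_m.
Qed.
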